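(* For almost all $n$-variable Boolean functions $f$ it holds that $NN(f)>\frac{2^{n/2}}{n}$; that is, the fraction of Boolean functions $f:\{0,1\}^n\to\{0,1\}$ satisfying $NN(f)>2^{n/2}/n$ tends to $1$ as $n\to\infty$.
   Context: For a Boolean function $f:\{0,1\}^n\to\{0,1\}$, a nearest neighbor representation is a pair of disjoint sets $(P,N)$ of points of $\mathbb R^n$ such that for every $a\in\{0,1\}^n$: if $f(a)=1$, there is $b\in P$ with $d(a,b)<d(a,c)$ for all $c\in N$; if $f(a)=0$, there is $b\in N$ with $d(a,b)<d(a,c)$ for all $c\in P$ ($d$ = Euclidean distance). $NN(f)$ is the minimum of $|P\cup N|$ over all nearest neighbor representations of $f$. *)

From HB Require Import structures.
From mathcomp Require Import all_boot all_order all_algebra.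
From mathcomp Require Import boolp classical_sets reals Rstruct Rstruct_topology topology normedtype sequences.
Set Implicit Arguments. Unset Strict Implicit. Unset Printing Implicit Defensive.
Import Order.TTheory GRing.Theory Num.Theory.
Local Open Scope ring_scope.

Notation R := Rdefinitions.R.

Definition cube (n : nat) := {ffun 'I_n -> bool}.
Definition boolfun (n : nat) := {ffun cube n -> bool}.

Definition emb n (a : cube n) : 'rV[R]_n := \row_i ((a i : nat)%:R).

Definition dist n (x y : 'rV[R]_n) : R :=
  Num.sqrt (\sum_(i < n) (x ord0 i - y ord0 i) ^+ 2).

Definition NN_rep n (f : boolfun n) (P N : seq 'rV[R]_n) : Prop :=
  (forall x, x \in P -> x \notin N) /\
  (forall a : cube n,
     (f a -> exists2 b, b \in P & forall c, c \in N -> dist (emb a) b < dist (emb a) c) /\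
     (~~ f a -> exists2 b, b \in N & forall c, c \in P -> dist (emb a) b < dist (emb a) c)).

Definition rep_size n (P N : seq 'rV[R]_n) : nat := size (undup (P ++ N)).

Definition has_rep_of_size n (f : boolfun n) (m : nat) : bool :=
  `[< exists P N, NN_rep f P N /\ rep_size P N = m >].

Lemma emb_inj n : injective (@emb n).
Proof.
move=> a b /matrixP H; apply/ffunP => i; have := H ord0 i; rewrite !mxE.
by case: (a i); case: (b i) => //= /eqP; rewrite ?oner_eq0 // eq_sym oner_eq0.
Qed.

Lemma dist_self n (x : 'rV[R]_n) : dist x x = 0.
Proof. by rewrite /dist big1 ?sqrtr0 // => i _; rewrite subrr expr0n. Qed.

Lemma dist_gt0 n (x y : 'rV[R]_n) : x != y -> 0 < dist x y.
Proof.
move=> nxy; rewrite /dist sqrtr_gt0.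
have [i Hi] : exists i, x ord0 i != y ord0 i.
  apply/existsP; apply: contraR nxy => /existsPn H; apply/eqP/matrixP => r j.
  by rewrite (ord1 r); apply/eqP; have := H j; rewrite negbK.
rewrite (bigD1 i) //= ltr_pwDl //.
  by rewrite lt_neqAle sqr_ge0 andbT eq_sym sqrf_eq0 subr_eq0 Hi.
by apply: sumr_ge0 => j _; rewrite sqr_ge0.
Qed.

Lemma NN_exists n (f : boolfun n) : exists m, has_rep_of_size f m.
Proof.
set P := [seq emb a | a <- enum (cube n) & f a].
set N := [seq emb a | a <- enum (cube n) & ~~ f a].
exists (rep_size P N); apply/asboolP; exists P, N; split=> //; split.
  move=> x /mapP [a]; rewrite mem_filter => /andP [fa _] ->.
  apply/mapP => -[b]; rewrite mem_filter => /andP [nfb _] /emb_inj eab.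
  by move: nfb; rewrite -eab fa.
move=> a; split=> Ha.
  exists (emb a); first by apply/mapP; exists a; rewrite // mem_filter Ha mem_enum.
  move=> c /mapP [b]; rewrite mem_filter => /andP [nfb _] ->.
  rewrite dist_self dist_gt0 //; apply/eqP => /emb_inj eab.
  by move: nfb; rewrite -eab Ha.
exists (emb a); first by apply/mapP; exists a; rewrite // mem_filter Ha mem_enum.
move=> c /mapP [b]; rewrite mem_filter => /andP [fb _] ->.
rewrite dist_self dist_gt0 //; apply/eqP => /emb_inj eab.
by move: Ha; rewrite eab fb.
Qed.

Definition NN n (f : boolfun n) : nat := ex_minn (NN_exists f).

From HB Require Import structures.
From mathcomp Require Import all_boot all_order all_algebra.
From mathcomp Require Import boolp classical_sets reals Rstruct Rstruct_topology topology normedtype sequences.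
From mathcomp Require Import zify ring.
Import Order.TTheory GRing.Theory Num.Theory.
Set Implicit Arguments. Unset Strict Implicit. Unset Printing Implicit Defensive.

(* If (P, N) represents f, then f a holds iff some b in P is nearer to a than
   every c in N, so f is an OR over P of ANDs over N of the functions
   [nearer b c], each of which is a linear threshold function of a.  A linear
   threshold function g with linear form L is determined by its Chow parameters
   (the number of its true points and, for each i, the number of those with
   a_i = 1): if h has the same parameters, then sum_a (g a - h a) * L a = 0 and
   every term is nonnegative, so g <= h.  Hence there are at most
   (2^n + 1)^(n + 1) threshold functions, and at most
   (2^n + 1)^2 * 2^((n + 1)^2 k^2 / 4) functions have NN(f) <= k.  For
   k = 2^(n/2) / n this is at most a fraction 1/(n + 1) of all 2^(2^n) functions. *)

Local Open Scope ring_scope.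

Lemma big_option (V : nmodType) (T : finType) (F : option T -> V) :
  \sum_(o : option T) F o = F None + \sum_(i : T) F (Some i).
Proof.
rewrite (bigD1 None) //=; congr (_ + _).
rewrite (reindex_omap Some id) //=; last by case.
by apply: eq_bigl => i; rewrite eqxx.
Qed.

Lemma sumr_card (T : finType) (P : pred T) :
  \sum_(a : T) ((P a : nat)%:R : R) = #|[pred a | P a]|%:R.
Proof.
rewrite -natr_sum -sum1_card [in RHS]big_mkcond /=.
by congr (_%:R); apply: eq_bigr => a _; rewrite inE; case: (P a).
Qed.

Section Threshold.

Variable n : nat.

(* Inputs are read in homogeneous coordinates: [None] is the constant
   coordinate 1, so [w None] is the bias and [chow_param g None] is the number
   of true points of [g]. *)
Definition ltf (w : option 'I_n -> R) : boolfun n :=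
  [ffun a : cube n => 0 < \sum_o w o * (oapp a true o : nat)%:R].

Definition chow_param (g : boolfun n) (o : option 'I_n) : nat :=
  #|[pred a | g a && oapp a true o]|.

Lemma ltf_sub_of_chow w (f : boolfun n) :
  chow_param (ltf w) =1 chow_param f -> forall a, ltf w a -> f a.
Proof.
move=> chowE.
pose L a := \sum_o w o * (oapp a true o : nat)%:R.
pose d a := ((ltf w a : nat)%:R - (f a : nat)%:R : R).
have sum_dL0 : \sum_a d a * L a = 0.
  under eq_bigr => a _ do rewrite /L mulr_sumr.
  rewrite exchange_big big1 //= => o _.
  under eq_bigr => a _ do rewrite mulrCA.
  rewrite -mulr_sumr; under eq_bigr => a _ do rewrite mulrBl -!natrM !mulnb.
  by rewrite sumrB !sumr_card -/(chow_param _ o) -/(chow_param _ o) chowE subrr mulr0.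
have dL_ge0 a : true -> 0 <= d a * L a.
  move=> _; rewrite /d ffunE -/(L a).
  case: ltP => L0; case: (f a) => /=.
  - by rewrite subrr mul0r.
  - by rewrite subr0 mul1r ltW.
  - by rewrite sub0r mulN1r oppr_ge0.
  - by rewrite subrr mul0r.
move=> a lwa; apply/negPn/negP => nfa.
have := psumr_eq0P dL_ge0 sum_dL0 (i := a) isT.
rewrite /d lwa (negbTE nfa) subr0 mul1r => /eqP; rewrite gt_eqF //.
by move: lwa; rewrite ffunE.
Qed.

Lemma ltf_chow_inj w1 w2 :
  chow_param (ltf w1) =1 chow_param (ltf w2) -> ltf w1 = ltf w2.
Proof.
by move=> chowE; apply/ffunP => a; apply/idP/idP; apply: ltf_sub_of_chow.
Qed.

Definition ltf_set : {set boolfun n} := [set g | `[< exists w, g = ltf w >]].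

Lemma card_ltf_set : (#|ltf_set| <= (2 ^ n).+1 ^ n.+1)%N.
Proof.
pose chow g : {ffun option 'I_n -> 'I_(2 ^ n).+1} := [ffun o => inord (chow_param g o)].
have chow_param_lt g o : (chow_param g o < (2 ^ n).+1)%N.
  by rewrite ltnS (leq_trans (max_card _)) // card_ffun card_bool card_ord.
have chow_inj : {in ltf_set &, injective chow}.
  move=> g1 g2; rewrite !inE => -[w1 ->] [w2 ->] /ffunP chowE.
  apply: ltf_chow_inj => o.
  by have := chowE o; rewrite !ffunE => /(congr1 val); rewrite /= !inordK.
by rewrite (leq_trans (leq_card_in _ _ chow_inj)) // card_ffun card_option !card_ord.
Qed.

End Threshold.

Definition nearer n (b c : 'rV[R]_n) : boolfun n :=
  [ffun a => dist (emb a) b < dist (emb a) c].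

Lemma nearer_ltf n (b c : 'rV[R]_n) :
  nearer b c = ltf (fun o => if o is Some i then 2 * (b ord0 i - c ord0 i)
                             else \sum_i (c ord0 i ^+ 2 - b ord0 i ^+ 2)).
Proof.
apply/ffunP => a; rewrite !ffunE /dist [in LHS]ltNge ler_sqrt; last first.
  by apply: sumr_ge0 => i _; exact: sqr_ge0.
rewrite -ltNge -subr_gt0 -sumrB big_option /= mulr1 -big_split /=.
by congr (0 < _); apply: eq_bigr => i _; rewrite !mxE; ring.
Qed.

Lemma nearer_in_ltf_set n (b c : 'rV[R]_n) : nearer b c \in ltf_set n.
Proof. by rewrite inE; apply/asboolP; eexists; exact: nearer_ltf. Qed.

Lemma NN_rep_has_all n (f : boolfun n) P N : NN_rep f P N ->
  f = [ffun a => has (fun b => all (fun c => nearer b c a) N) P].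
Proof.
move=> [_ rep]; apply/ffunP => a; rewrite ffunE.
have [fa_P nfa_N] := rep a; have [fa|nfa] := boolP (f a).
  have [b bP bN] := fa_P fa.
  by apply/esym/hasP; exists b => //; apply/allP => c cN; rewrite ffunE bN.
have [c cN cP] := nfa_N nfa.
apply/esym/hasPn => b bP; apply/allPn; exists c => //.
by rewrite ffunE -leNgt ltW ?cP.
Qed.

Lemma has_ord_nth (T : Type) (x0 : T) (s : seq T) (p : pred T) :
  [exists i : 'I_(size s), p (nth x0 s i)] = has p s.
Proof.
apply/existsP/(has_nthP x0) => [[i pi]|[i lti pi]]; first by exists i.
by exists (Ordinal lti).
Qed.

Lemma all_ord_nth (T : Type) (x0 : T) (s : seq T) (p : pred T) :
  [forall i : 'I_(size s), p (nth x0 s i)] = all p s.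
Proof.
apply/forallP/(all_nthP x0) => [pi i lti|pi i]; last exact: pi.
exact: (pi (Ordinal lti)).
Qed.

Lemma leq_expn2r m1 m2 e : (m1 <= m2)%N -> (m1 ^ e <= m2 ^ e)%N.
Proof. by case: e => // e; rewrite leq_exp2r. Qed.

Definition or_and n p q (t : {ffun 'I_p * 'I_q -> boolfun n}) : boolfun n :=
  [ffun a => [exists i, [forall j, t (i, j) a]]].

Definition or_and_ltf n p q : {set boolfun n} := @or_and n p q @: ffun_on (ltf_set n).

Lemma card_or_and_ltf n p q :
  (#|or_and_ltf n p q| <= ((2 ^ n).+1 ^ n.+1) ^ (p * q))%N.
Proof.
rewrite (leq_trans (leq_imset_card _ _)) // card_ffun_on card_prod !card_ord.
exact/leq_expn2r/card_ltf_set.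
Qed.

Lemma NN_rep_or_and n (f : boolfun n) P N :
  NN_rep f P N -> f \in or_and_ltf n (size (undup P)) (size (undup N)).
Proof.
move=> rep; apply/imsetP.
exists [ffun ij : 'I_(size (undup P)) * 'I_(size (undup N)) =>
          nearer (nth 0 (undup P) ij.1) (nth 0 (undup N) ij.2)].
  by apply/ffun_onP => ij; rewrite ffunE nearer_in_ltf_set.
rewrite (NN_rep_has_all rep); apply/ffunP => a; rewrite !ffunE.
rewrite -has_undup -(has_ord_nth 0); apply: eq_existsb => i.
rewrite -all_undup -(all_ord_nth 0); apply: eq_forallb => j.
by rewrite [in RHS]ffunE.
Qed.

Lemma size_undup_NN_rep n (f : boolfun n) P N : NN_rep f P N ->
  (size (undup P) + size (undup N) <= rep_size P N)%N.
Proof.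
move=> [disj _]; rewrite /rep_size -size_cat; apply: uniq_leq_size.
  rewrite cat_uniq !undup_uniq /= andbT; apply/hasPn => x.
  by rewrite !mem_undup => xN; apply/negP => /disj; rewrite xN.
by move=> x; rewrite mem_undup !mem_cat !mem_undup.
Qed.

Lemma NN_or_and n (f : boolfun n) :
  exists p q, (p + q <= NN f)%N /\ f \in or_and_ltf n p q.
Proof.
rewrite /NN; case: ex_minnP => m /asboolP[P [N [rep <-]]] _.
exists (size (undup P)), (size (undup N)).
by rewrite (size_undup_NN_rep rep) (NN_rep_or_and rep).
Qed.

Local Close Scope ring_scope.

Lemma card_bigcup_le (I T : finType) (P : pred I) (F : I -> {set T}) :
  #|\bigcup_(i | P i) F i| <= \sum_(i | P i) #|F i|.
Proof.
apply: (big_ind2 (fun (U : {set T}) s => #|U| <= s)) => [|U1 s1 U2 s2 le1 le2|//].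
  by rewrite cards0.
exact: leq_trans (leq_card_setU U1 U2) (leq_add le1 le2).
Qed.

Lemma small_NN_or_and n (f : boolfun n) : 0 < n -> n ^ 2 * NN f ^ 2 <= 2 ^ n ->
  f \in \bigcup_(pq : 'I_(2 ^ n).+1 * 'I_(2 ^ n).+1 | 4 * n ^ 2 * (pq.1 * pq.2) <= 2 ^ n)
          or_and_ltf n pq.1 pq.2.
Proof.
move=> n_gt0 NN_small; have [p [q [pq_le f_in]]] := NN_or_and f.
have NN_le : NN f <= 2 ^ n by nia.
have p_lt : p < (2 ^ n).+1 by lia.
have q_lt : q < (2 ^ n).+1 by lia.
apply/bigcupP; exists (Ordinal p_lt, Ordinal q_lt) => //=.
apply: leq_trans NN_small; rewrite mulnAC mulnC leq_mul2l; apply/orP; right.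
by rewrite (leq_trans (nat_AGM2 p q)) ?leq_exp2r.
Qed.

Lemma card_or_and_small n p q : 7 <= n -> 4 * n ^ 2 * (p * q) <= 2 ^ n ->
  #|or_and_ltf n p q| <= 2 ^ (2 ^ n %/ 3).
Proof.
move=> n_ge7 pq_small; apply: leq_trans (card_or_and_ltf n p q) _.
have : (2 ^ n).+1 <= 2 ^ n.+1 by rewrite expnS; have := expn_gt0 2 n; lia.
move/(leq_expn2r n.+1)/(leq_expn2r (p * q))/leq_trans; apply.
rewrite -!expnM leq_pexp2l // leq_divRL //.
have : 3 * (n.+1 * n.+1) <= 4 * n ^ 2 by nia.
by move/leq_mul/(_ (leqnn (p * q))); lia.
Qed.

Lemma card_small_NN n : 7 <= n ->
  #|[set f : boolfun n | n ^ 2 * NN f ^ 2 <= 2 ^ n]| <= (2 ^ n).+1 ^ 2 * 2 ^ (2 ^ n %/ 3).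
Proof.
move=> n_ge7.
set U := \bigcup_(pq : 'I_(2 ^ n).+1 * 'I_(2 ^ n).+1 | 4 * n ^ 2 * (pq.1 * pq.2) <= 2 ^ n)
           or_and_ltf n pq.1 pq.2.
apply: (@leq_trans #|U|).
  by apply/subset_leq_card/fintype.subsetP => f; rewrite inE; apply: small_NN_or_and; lia.
apply: leq_trans (card_bigcup_le _ _) _.
apply: (@leq_trans (\sum_(pq : 'I_(2 ^ n).+1 * 'I_(2 ^ n).+1 | 4 * n ^ 2 * (pq.1 * pq.2) <= 2 ^ n)
                      2 ^ (2 ^ n %/ 3))).
  by apply: leq_sum => pq; exact: card_or_and_small.
rewrite sum_nat_const leq_mul2r (leq_trans (max_card _)) ?orbT //.
by rewrite card_prod !card_ord.
Qed.

Lemma linear_le_exp n : 7 <= n -> 9 * n + 6 <= 2 ^ n.+1.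
Proof.
elim: n => [|n IH] //; rewrite leq_eqVlt => /orP [/eqP <- //|].
by rewrite ltnS => n_ge7; have := IH n_ge7; rewrite [2 ^ n.+2]expnS; lia.
Qed.

Lemma exp_gap n : 7 <= n -> (2 ^ n).+1 ^ 2 * 2 ^ (2 ^ n %/ 3) * n.+1 <= 2 ^ 2 ^ n.
Proof.
move=> n_ge7; have := linear_le_exp n_ge7; rewrite expnS; set T := 2 ^ n => lin_le_T.
have T_gap : 3 * n + 2 <= T - T %/ 3 by lia.
rewrite -[X in _ <= 2 ^ X](subnK (leq_div T 3)) expnD mulnAC leq_mul2r expn_eq0 /=.
apply: leq_trans (leq_pexp2l _ T_gap) => //.
have T_pos : 0 < T by rewrite expn_gt0.
have n_lt_T : n < T := ltn_expl n (ltnSn 1).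
have -> : 2 ^ (3 * n + 2) = 2 * T * (2 * T) * T.
  by rewrite expnD [3 * n]mulnC expnM -/T; ring.
rewrite -mulnn; apply: leq_mul => //; apply: leq_mul; lia.
Qed.

Local Open Scope ring_scope.

Lemma sqr_le_of_le_sqrt2_div n k : (0 < n)%N ->
  k%:R <= Num.sqrt (2 : R) ^+ n / n%:R -> (n ^ 2 * k ^ 2 <= 2 ^ n)%N.
Proof.
move=> n_gt0; rewrite ler_pdivlMr ?ltr0n // => le_kn.
have kn_ge0 : 0 <= k%:R * n%:R :> R by rewrite mulr_ge0.
have := ler_pM kn_ge0 kn_ge0 le_kn le_kn.
rewrite -exprMn -expr2 -[_ * Num.sqrt 2]expr2 sqr_sqrtr ?ler0n //.
by rewrite -!natrM -!natrX ler_nat mulnC -mulnn -!expnMn.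
Qed.

Lemma card_boolfun n : #|{: boolfun n}| = (2 ^ 2 ^ n)%N.
Proof. by rewrite !card_ffun !card_bool card_ord. Qed.

Lemma frac_NN_large_bounds n : (7 <= n)%N ->
  1 - harmonic n <=
  #|[pred f : boolfun n | Num.sqrt (2 : R) ^+ n / n%:R < (NN f)%:R]|%:R
    / (#|{: boolfun n}|%:R : R) <= 1.
Proof.
move=> n_ge7; set G := [pred f : boolfun n | _]; set tot := #|{: boolfun n}|%:R.
have tot_gt0 : 0 < tot by rewrite ltr0n card_boolfun expn_gt0.
have compl_small : (#|[predC G]| * n.+1 <= #|{: boolfun n}|)%N.
  rewrite card_boolfun (leq_trans _ (exp_gap n_ge7)) // leq_mul2r; apply/orP; right.
  apply: leq_trans (card_small_NN n_ge7); apply/subset_leq_card/fintype.subsetP => f.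
  by rewrite !inE -leNgt; apply: sqr_le_of_le_sqrt2_div; lia.
have -> : #|G|%:R / tot = 1 - #|[predC G]|%:R / tot.
  by apply/eqP; rewrite eq_sym subr_eq -mulrDl -natrD cardC divff // gt_eqF.
apply/andP; split; last by rewrite gerBl divr_ge0 ?ler0n ?ltW.
rewrite lerD2l lerN2 /=.
by rewrite ler_pdivrMr // mulrC ler_pdivlMr ?ltr0n // -natrM ler_nat.
Qed.

Local Open Scope classical_set_scope.
Local Open Scope ring_scope.

Theorem theorem5 :
  (fun n : nat =>
     (#|[pred f : boolfun n | (Num.sqrt (2 : R)) ^+ n / n%:R < (NN f)%:R]|%:R
        / (#|{: boolfun n}|%:R : R)))
  @ \oo --> (1 : R).
Proof.
apply: (@squeeze_cvgr _ _ _ _ (fun n => 1 - harmonic n) (fun _ => 1)).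
- by exists 7%N => // n /= n_ge7; exact: frac_NN_large_bounds.
- rewrite -[X in _ --> X]subr0.
  by apply: (@cvgB _ R^o); [exact: cvg_cst | exact: cvg_harmonic].
- exact: cvg_cst.
Qed.
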